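(* Let $p>q\ge2$, fix $\arg\mu\in\mathbb{R}$ and $k\in\{0,\dots,r-1\}$, and for $\rho>0$ let $N(\rho)$ be the number of $\theta\in[0,2\pi)$ with $T(\theta;\rho)=0$. If $0<\rho_1<\rho_2$ are such that all zeros of $T(\cdot;\rho_1)$ and of $T(\cdot;\rho_2)$ are simple, then $N(\rho_1)\ge N(\rho_2)$; that is, the number of solutions of $T(\theta;\rho)=0$ is monotone non-increasing in $\rho=|\mu|\in(0,\infty)$.
   Context: Let $r=\gcd(p-1,q-1)$, $A=p^{-1/(p-1)}$, $B=q^{-1/(q-1)}$, $m=\frac{(p-1)(q+1)}{2r}$, $n=\frac{(p+1)(q-1)}{2r}$, $c_k=\frac{1}{p-1}(-2\arg\mu+2\pi k)$, $c_k'=\frac{p+1}{2}c_k$, $C=\frac{(p-1)B}{(q-1)A}>0$, and for $\rho>0$, $T(\theta;\rho)=(-1)^k\rho\sin(n\theta+c_k')+C\sin(m\theta)$. (The zero set of $T(\cdot;\rho)$ is $2\pi$-periodic.) *)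

From Stdlib Require Import Reals Lra Lia List.
Open Scope R_scope.

Definition rr (p q : nat) : nat := Nat.gcd (p - 1) (q - 1).

Definition AA (p : nat) : R := Rpower (INR p) (- / (INR p - 1)).
Definition BB (q : nat) : R := Rpower (INR q) (- / (INR q - 1)).

Definition mm (p q : nat) : R :=
  (INR p - 1) * (INR q + 1) / (2 * INR (rr p q)).
Definition nn (p q : nat) : R :=
  (INR p + 1) * (INR q - 1) / (2 * INR (rr p q)).

Definition ck (p : nat) (argmu : R) (k : nat) : R :=
  / (INR p - 1) * (-2 * argmu + 2 * PI * INR k).
Definition ck' (p : nat) (argmu : R) (k : nat) : R :=
  (INR p + 1) / 2 * ck p argmu k.

Definition CC (p q : nat) : R :=
  (INR p - 1) * BB q / ((INR q - 1) * AA p).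

Definition T (p q : nat) (argmu : R) (k : nat) (theta rho : R) : R :=
  (-1) ^ k * rho * sin (nn p q * theta + ck' p argmu k)
  + CC p q * sin (mm p q * theta).

Definition all_zeros_simple (p q : nat) (argmu : R) (k : nat) (rho : R) : Prop :=
  forall theta : R, T p q argmu k theta rho = 0 ->
    forall l : R, derivable_pt_lim (fun t => T p q argmu k t rho) theta l -> l <> 0.

Definition num_zeros (p q : nat) (argmu : R) (k : nat) (rho : R) (N : nat) : Prop :=
  exists l : list R, NoDup l /\ length l = N /\
    forall theta : R, In theta l <->
      (0 <= theta < 2 * PI /\ T p q argmu k theta rho = 0).

(* Write T(.; rho) = rho a + b with a = (-1)^k sin (n t + c_k') and b = C sin (m t): then
   a'' = -n^2 a, b'' = -m^2 b with 0 < n < m, and a shift by 2 pi multiplies a and b by the same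
   sign.  Away from the roots of a, the roots of T(.; rho) are the solutions of b / a = -rho, and
   (b / a)' = W / a^2 for the Wronskian W = a b' - a' b, which satisfies W' = (n^2 - m^2) a b.
   From a root x of T(.; rho2), move in the direction in which b / a increases: W keeps its sign
   and a does not vanish until b / a reaches -rho1, because hitting a root of W or a common root
   of a and b first would, by W' = (n^2 - m^2) a b, force W to change sign just before it.  By
   periodicity this happens within one period, so every root of T(.; rho2) is carried to a root
   of T(.; rho1); the strict monotonicity of b / a along the way makes this map injective modulo
   2 pi, while common roots of a and b are roots for every rho. *)

From Stdlib Require Import Reals Lra Lia List ZArith Classical.
Open Scope R_scope.

(** * Derivatives, signs and roots of real functions *)

Lemma derivable_pt_lim_mult_eq (f g : R -> R) x l1 l2 l :
  derivable_pt_lim f x l1 -> derivable_pt_lim g x l2 -> l = l1 * g x + f x * l2 ->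
  derivable_pt_lim (fun u => f u * g u) x l.
Proof. intros Hf Hg ->. exact (derivable_pt_lim_mult f g x l1 l2 Hf Hg). Qed.

Lemma derivable_pt_lim_plus_eq (f g : R -> R) x l1 l2 l :
  derivable_pt_lim f x l1 -> derivable_pt_lim g x l2 -> l = l1 + l2 ->
  derivable_pt_lim (fun u => f u + g u) x l.
Proof. intros Hf Hg ->. exact (derivable_pt_lim_plus f g x l1 l2 Hf Hg). Qed.

Lemma derivable_pt_lim_minus_eq (f g : R -> R) x l1 l2 l :
  derivable_pt_lim f x l1 -> derivable_pt_lim g x l2 -> l = l1 - l2 ->
  derivable_pt_lim (fun u => f u - g u) x l.
Proof. intros Hf Hg ->. exact (derivable_pt_lim_minus f g x l1 l2 Hf Hg). Qed.

Lemma derivable_pt_lim_scal_eq (c : R) (f : R -> R) x l1 l :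
  derivable_pt_lim f x l1 -> l = c * l1 -> derivable_pt_lim (fun u => c * f u) x l.
Proof. intros Hf ->. exact (derivable_pt_lim_scal f c x l1 Hf). Qed.

Lemma derivable_pt_lim_opp_comp (f : R -> R) x l :
  derivable_pt_lim f (- x) l -> derivable_pt_lim (fun u => f (- u)) x (- l).
Proof.
  intro Hf. replace (- l) with (l * -1) by ring.
  apply (derivable_pt_lim_comp Ropp f x (-1) l); [|exact Hf].
  replace (-1) with (- 1) by ring. apply (derivable_pt_lim_opp id x 1), derivable_pt_lim_id.
Qed.

Lemma continuity_of_derivative (h h' : R -> R) :
  (forall t, derivable_pt_lim h t (h' t)) -> continuity h.
Proof. intros Hd t. apply derivable_continuous_pt. exists (h' t). apply Hd. Qed.

Lemma continuity_pt_pos_near (h : R -> R) s : continuity_pt h s -> 0 < h s ->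
  exists d, 0 < d /\ forall t, Rabs (t - s) < d -> 0 < h t.
Proof.
  intros Hc Hs. destruct (Hc (h s / 2)) as [d [Hd Hnear]]; [lra|].
  exists d; split; [lra|]. intros t Ht.
  destruct (Req_dec t s) as [->|Hts]; [lra|].
  specialize (Hnear t (conj (conj I (not_eq_sym Hts)) Ht)).
  simpl in Hnear. unfold R_dist in Hnear. apply Rabs_def2 in Hnear. lra.
Qed.

Lemma continuity_pt_neq0_near (h : R -> R) s : continuity_pt h s -> h s <> 0 ->
  exists d, 0 < d /\ forall t, Rabs (t - s) < d -> h t <> 0.
Proof.
  intros Hc Hs.
  destruct (continuity_pt_pos_near (fun t => Rabs (h t)) s) as [d [Hd Hnear]].
  - apply (continuity_pt_comp h Rabs); [exact Hc | apply Rcontinuity_abs].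
  - now apply Rabs_pos_lt.
  - exists d; split; [exact Hd|]. intros t Ht Hzero.
    specialize (Hnear t Ht). rewrite Hzero, Rabs_R0 in Hnear. lra.
Qed.

Lemma exists_left_point x s d : x < s -> 0 < d -> exists u, x <= u < s /\ s - d < u.
Proof.
  intros Hxs Hd. exists (Rmax x (s - d / 2)).
  assert (x <= Rmax x (s - d / 2)) by apply Rmax_l.
  assert (s - d / 2 <= Rmax x (s - d / 2)) by apply Rmax_r.
  assert (Rmax x (s - d / 2) < s) by (apply Rmax_lub_lt; lra). lra.
Qed.

Lemma left_limit_nonpos (h : R -> R) x s : x < s -> continuity_pt h s ->
  (forall t, x <= t < s -> h t <= 0) -> h s <= 0.
Proof.
  intros Hxs Hc Hle. destruct (Rle_or_lt (h s) 0) as [|Hpos]; [assumption|].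
  destruct (continuity_pt_pos_near h s Hc Hpos) as [d [Hd Hnear]].
  destruct (exists_left_point x s d Hxs Hd) as [t [Ht Htd]].
  assert (0 < h t) by (apply Hnear, Rabs_def1; lra).
  specialize (Hle t Ht). lra.
Qed.

Lemma right_limit_nonpos (h : R -> R) x s : s < x -> continuity_pt h s ->
  (forall t, s < t <= x -> h t <= 0) -> h s <= 0.
Proof.
  intros Hsx Hc Hle. replace (h s) with (h (- - s)) by now rewrite Ropp_involutive.
  apply (left_limit_nonpos (fun t => h (- t)) (- x) (- s)); [lra| |].
  - apply (continuity_pt_comp Ropp h);
      [apply (continuity_pt_opp id), derivable_continuous_pt, derivable_pt_id|].
    now rewrite Ropp_involutive.
  - intros t Ht. apply Hle. lra.
Qed.

Lemma increasing_of_derivative_pos (h h' : R -> R) u v : u < v ->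
  (forall c, u <= c <= v -> derivable_pt_lim h c (h' c)) ->
  (forall c, u < c < v -> 0 < h' c) -> h u < h v.
Proof.
  intros Huv Hd Hpos. destruct (MVT_cor2 h h' u v Huv Hd) as [c [Hmvt Hc]].
  specialize (Hpos c Hc). nra.
Qed.

Lemma decreasing_of_derivative_neg (h h' : R -> R) u v : u < v ->
  (forall c, u <= c <= v -> derivable_pt_lim h c (h' c)) ->
  (forall c, u < c < v -> h' c < 0) -> h v < h u.
Proof.
  intros Huv Hd Hneg. destruct (MVT_cor2 h h' u v Huv Hd) as [c [Hmvt Hc]].
  specialize (Hneg c Hc). nra.
Qed.

Section Sign_left_of_a_root.
Variables (h h' : R -> R) (s d : R).
Hypothesis h_deriv : forall c, derivable_pt_lim h c (h' c).
Hypothesis h_root : h s = 0.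

Lemma neg_left_of_root : (forall c, s - d < c < s -> 0 < h' c) ->
  forall c, s - d < c < s -> h c < 0.
Proof.
  intros Hpos c Hc. rewrite <- h_root.
  apply (increasing_of_derivative_pos h h'); [lra | intros; apply h_deriv |].
  intros; apply Hpos; lra.
Qed.

Lemma pos_left_of_root : (forall c, s - d < c < s -> h' c < 0) ->
  forall c, s - d < c < s -> 0 < h c.
Proof.
  intros Hneg c Hc. rewrite <- h_root.
  apply (decreasing_of_derivative_neg h h'); [lra | intros; apply h_deriv |].
  intros; apply Hneg; lra.
Qed.

End Sign_left_of_a_root.

Lemma neg_left_of_simple_root (h h1 : R -> R) s :
  (forall c, derivable_pt_lim h c (h1 c)) -> continuity_pt h1 s ->
  h s = 0 -> 0 < h1 s -> exists d, 0 < d /\ forall c, s - d < c < s -> h c < 0.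
Proof.
  intros Hd Hc H0 H1. destruct (continuity_pt_pos_near h1 s Hc H1) as [d [Hdpos Hnear]].
  exists d; split; [exact Hdpos|].
  apply (neg_left_of_root h h1); [exact Hd | exact H0 |].
  intros c Hcs. apply Hnear, Rabs_def1; lra.
Qed.

Lemma pos_left_of_double_root (h h1 h2 : R -> R) s :
  (forall c, derivable_pt_lim h c (h1 c)) -> (forall c, derivable_pt_lim h1 c (h2 c)) ->
  continuity_pt h2 s -> h s = 0 -> h1 s = 0 -> 0 < h2 s ->
  exists d, 0 < d /\ forall c, s - d < c < s -> 0 < h c.
Proof.
  intros Hd Hd1 Hc H0 H1 H2.
  destruct (neg_left_of_simple_root h1 h2 s Hd1 Hc H1 H2) as [d [Hdpos Hneg]].
  exists d; split; [exact Hdpos|]. exact (pos_left_of_root h h1 s d Hd H0 Hneg).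
Qed.

Lemma neg_left_of_triple_root (h h1 h2 h3 : R -> R) s :
  (forall c, derivable_pt_lim h c (h1 c)) -> (forall c, derivable_pt_lim h1 c (h2 c)) ->
  (forall c, derivable_pt_lim h2 c (h3 c)) -> continuity_pt h3 s ->
  h s = 0 -> h1 s = 0 -> h2 s = 0 -> 0 < h3 s ->
  exists d, 0 < d /\ forall c, s - d < c < s -> h c < 0.
Proof.
  intros Hd Hd1 Hd2 Hc H0 H1 H2 H3.
  destruct (pos_left_of_double_root h1 h2 h3 s Hd1 Hd2 Hc H1 H2 H3) as [d [Hdpos Hpos]].
  exists d; split; [exact Hdpos|]. exact (neg_left_of_root h h1 s d Hd H0 Hpos).
Qed.

Lemma sign_persistence (h : R -> R) u v : continuity h ->
  (forall t, u <= t <= v -> h t <> 0) -> 0 < h u -> forall t, u <= t <= v -> 0 < h t.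
Proof.
  intros Hc Hnz Hu t Ht. destruct (Rlt_or_le 0 (h t)) as [|Hle]; [assumption|].
  assert (Hneg : h t < 0) by (specialize (Hnz t Ht); lra).
  destruct (Req_dec u t) as [<-|Hut]; [lra|].
  destruct (IVT (fun y => - h y) u t) as [z [Hz Hz0]].
  - intro y. apply continuity_pt_opp, Hc.
  - lra.
  - lra.
  - lra.
  - exfalso. apply (Hnz z); lra.
Qed.

Lemma first_root (h : R -> R) u v : continuity h -> u < v -> h u <> 0 -> h v = 0 ->
  exists s, u < s <= v /\ h s = 0 /\ forall t, u <= t < s -> h t <> 0.
Proof.
  intros Hc Huv Hu Hv.
  set (E := fun z => u <= z <= v /\ forall t, u <= t <= z -> h t <> 0).
  assert (Eu : E u) by (split; [lra|]; intros t Ht; replace t with u by lra; exact Hu).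
  destruct (completeness E) as [s [Hub Hlub]].
  { exists v. intros z [Hz _]. lra. }
  { exists u. exact Eu. }
  assert (Hus : u <= s) by (apply Hub, Eu).
  assert (Hsv : s <= v) by (apply Hlub; intros z [Hz _]; lra).
  assert (Hbelow : forall t, u <= t < s -> h t <> 0).
  { intros t Ht. destruct (classic (exists z, E z /\ t <= z)) as [[z [[_ Hz] Htz]]|Hnone].
    - apply Hz; lra.
    - exfalso. assert (s <= t); [|lra]. apply Hlub. intros z Ez.
      destruct (Rle_or_lt z t) as [|Hzt]; [assumption|].
      exfalso. apply Hnone. exists z. split; [exact Ez | lra]. }
  assert (Hstep : forall z, u <= z -> h z <> 0 -> (forall t, u <= t < z -> h t <> 0) ->
            z < v -> exists z', z < z' /\ E z').
  { intros z Huz Hz Hbz Hzv. destruct (continuity_pt_neq0_near h z (Hc z) Hz) as [d [Hd Hnear]].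
    exists (Rmin v (z + d / 2)).
    assert (Rmin v (z + d / 2) <= v) by apply Rmin_l.
    assert (Rmin v (z + d / 2) <= z + d / 2) by apply Rmin_r.
    assert (z < Rmin v (z + d / 2)) by (apply Rmin_glb_lt; lra).
    split; [lra|]. split; [lra|]. intros t Ht. destruct (Rlt_or_le t z).
    - apply Hbz; lra.
    - apply Hnear, Rabs_def1; lra. }
  assert (Hhs : h s = 0).
  { apply NNPP. intro Hs. destruct (Req_dec s v) as [->|Hne]; [exact (Hs Hv)|].
    destruct (Hstep s Hus Hs Hbelow) as [z' [Hsz' Ez']]; [lra|].
    specialize (Hub z' Ez'). lra. }
  assert (Hus' : u < s).
  { destruct (Req_dec u s) as [<-|]; [|lra]. exfalso. exact (Hu Hhs). }
  exists s. split; [lra|]. split; assumption.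
Qed.

(** * Finitely many simple roots on an interval *)

Lemma isolated_simple_root (h : R -> R) z l :
  derivable_pt_lim h z l -> l <> 0 -> h z = 0 ->
  exists d, 0 < d /\ forall t, 0 < Rabs (t - z) < d -> h t <> 0.
Proof.
  intros Hd Hl H0. destruct (Hd (Rabs l / 2)) as [d Hd']; [apply Rabs_pos_lt in Hl; lra|].
  exists d; split; [apply cond_pos|]. intros t [Hpos Hlt] Ht.
  assert (Hne : t - z <> 0) by (intro E; rewrite E, Rabs_R0 in Hpos; lra).
  specialize (Hd' (t - z) Hne Hlt). replace (z + (t - z)) with t in Hd' by ring.
  rewrite Ht, H0 in Hd'. replace ((0 - 0) / (t - z) - l) with (- l) in Hd' by (field; exact Hne).
  rewrite Rabs_Ropp in Hd'. apply Rabs_pos_lt in Hl. lra.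
Qed.

Lemma isolated_roots_finite (h : R -> R) u v : continuity h ->
  (forall z, h z = 0 -> exists d, 0 < d /\ forall t, 0 < Rabs (t - z) < d -> h t <> 0) ->
  u <= v -> exists l, forall t, u <= t <= v -> h t = 0 -> In t l.
Proof.
  intros Hc Hiso Huv.
  set (P := fun z => exists l, forall t, u <= t <= z -> h t = 0 -> In t l).
  set (E := fun z => u <= z <= v /\ P z).
  assert (Eu : E u). { split; [lra|]. exists (u :: nil). intros t Ht _. left; lra. }
  destruct (completeness E) as [s [Hub Hlub]].
  { exists v. intros z [Hz _]. lra. }
  { exists u. exact Eu. }
  assert (Hus : u <= s) by (apply Hub, Eu).
  assert (Hsv : s <= v) by (apply Hlub; intros z [Hz _]; lra).
  assert (Hnear : exists d, 0 < d /\ forall t, 0 < Rabs (t - s) < d -> h t <> 0).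
  { destruct (Req_dec (h s) 0) as [Hz|Hz]; [exact (Hiso s Hz)|].
    destruct (continuity_pt_neq0_near h s (Hc s) Hz) as [d [Hd Hd']].
    exists d; split; [exact Hd|]. intros t Ht; apply Hd'; lra. }
  destruct Hnear as [d [Hd Hd']].
  assert (Hz : exists z, E z /\ s - d < z).
  { apply NNPP. intro Hn. assert (s <= s - d); [|lra]. apply Hlub. intros z Ez.
    destruct (Rle_or_lt z (s - d)); [assumption|]. exfalso; apply Hn; exists z; auto. }
  destruct Hz as [z [[Hz [l Hl]] Hzs]].
  set (z' := Rmin v (s + d / 2)).
  assert (Hzs' : z <= s) by (apply Hub; split; [exact Hz | exists l; exact Hl]).
  assert (Hz'v : z' <= v) by apply Rmin_l. assert (Hz'd : z' <= s + d / 2) by apply Rmin_r.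
  assert (Pz' : P z').
  { exists (s :: l). intros t Ht Ht0. destruct (Rle_or_lt t z) as [Htz|Htz].
    - right; apply Hl; [lra | exact Ht0].
    - destruct (Req_dec t s) as [->|Hne]; [left; reflexivity|].
      exfalso. apply (Hd' t); [|exact Ht0].
      split; [apply Rabs_pos_lt; lra | apply Rabs_def1; lra]. }
  assert (Hz's : z' <= s)
    by (apply Hub; split; [split; [apply Rmin_glb; lra | exact Hz'v] | exact Pz']).
  assert (Hv : z' = v).
  { destruct (Rle_or_lt v (s + d / 2)); [apply Rmin_left; assumption|].
    exfalso. unfold z' in Hz's. rewrite Rmin_right in Hz's; lra. }
  rewrite <- Hv. exact Pz'.
Qed.

Lemma enumerate_roots (h : R -> R) u v (L : list R) :
  (forall t, u <= t < v -> h t = 0 -> In t L) ->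
  exists l, NoDup l /\ forall t, In t l <-> (u <= t < v /\ h t = 0).
Proof.
  intro HL.
  set (is_root := fun t => if Rle_dec u t then if Rlt_dec t v then
                    if Req_dec_T (h t) 0 then true else false else false else false).
  assert (Hroot : forall t, is_root t = true <-> (u <= t < v /\ h t = 0)).
  { intro t. unfold is_root.
    destruct (Rle_dec u t), (Rlt_dec t v), (Req_dec_T (h t) 0); split;
      intuition (try discriminate; lra). }
  exists (nodup Req_dec_T (filter is_root L)). split; [apply NoDup_nodup|].
  intro t. rewrite nodup_In, filter_In, Hroot. split; [tauto|].
  intros Ht. split; [apply HL; apply Ht | exact Ht].
Qed.

Lemma simple_roots_enumerable (h h' : R -> R) u v : u <= v ->
  (forall t, derivable_pt_lim h t (h' t)) -> (forall t, h t = 0 -> h' t <> 0) ->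
  exists l, NoDup l /\ forall t, In t l <-> (u <= t < v /\ h t = 0).
Proof.
  intros Huv Hd Hsimple.
  destruct (isolated_roots_finite h u v (continuity_of_derivative h h' Hd)) as [L HL];
    [intros z Hz; exact (isolated_simple_root h z (h' z) (Hd z) (Hsimple z Hz) Hz) | exact Huv |].
  apply (enumerate_roots h u v L). intros t Ht. apply HL. lra.
Qed.

Lemma NoDup_length_le_of_rel (rel : R -> R -> Prop) (l2 : list R) : NoDup l2 ->
  forall l1 : list R,
  (forall x, In x l2 -> exists y, In y l1 /\ rel x y) ->
  (forall x1 x2 y, In x1 l2 -> In x2 l2 -> rel x1 y -> rel x2 y -> x1 = x2) ->
  (length l2 <= length l1)%nat.
Proof.
  induction 1 as [|x l2 Hx Hnd IH]; intros l1 Himg Hinj; simpl; [lia|].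
  destruct (Himg x (or_introl eq_refl)) as [y [Hy Hxy]].
  assert (Hlt := remove_length_lt Req_dec_T l1 y Hy).
  enough (length l2 <= length (remove Req_dec_T y l1))%nat by lia.
  apply IH.
  - intros x' Hx'. destruct (Himg x' (or_intror Hx')) as [y' [Hy' Hxy']].
    exists y'. split; [|exact Hxy']. apply in_in_remove; [|exact Hy'].
    intros ->. assert (x' = x) as -> by (apply (Hinj x' x y); simpl; auto). contradiction.
  - intros; apply (Hinj x1 x2 y0); simpl; auto.
Qed.

Lemma shift_mult_2PI (f : R -> R) e : e * e = 1 ->
  (forall t, f (t + 2 * PI) = e * f t) ->
  forall (j : Z) t, f (t + 2 * PI * IZR j) = e ^ Z.abs_nat j * f t.
Proof.
  intros He Hf.
  assert (Hnat : forall (j : nat) t, f (t + 2 * PI * INR j) = e ^ j * f t).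
  { induction j as [|j IH]; intro t; simpl pow.
    - simpl INR. rewrite Rmult_0_r, Rplus_0_r. ring.
    - rewrite S_INR. replace (t + 2 * PI * (INR j + 1)) with (t + 2 * PI * INR j + 2 * PI) by ring.
      rewrite Hf, IH. ring. }
  intros [|j|j] t; simpl Z.abs_nat.
  - simpl. rewrite Rmult_0_r, Rplus_0_r. ring.
  - rewrite <- (positive_nat_Z j), <- INR_IZR_INZ. apply Hnat.
  - replace (IZR (Z.neg j)) with (- INR (Pos.to_nat j))
      by (rewrite INR_IZR_INZ, positive_nat_Z; reflexivity).
    set (N := Pos.to_nat j). set (t' := t + 2 * PI * - INR N).
    replace (f t) with (f (t' + 2 * PI * INR N)) by (f_equal; unfold t'; ring).
    rewrite Hnat, <- Rmult_assoc, <- Rpow_mult_distr, He, pow1. ring.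
Qed.

Lemma decompose_mod_2PI t : exists (j : Z) y, 0 <= y < 2 * PI /\ t = y + 2 * PI * IZR j.
Proof.
  assert (HPI := PI_RGT_0).
  destruct (archimed (t / (2 * PI))) as [Hup Hup'].
  exists (up (t / (2 * PI)) - 1)%Z, (t - 2 * PI * IZR (up (t / (2 * PI)) - 1)).
  rewrite minus_IZR. split; [|ring].
  set (u := IZR (up (t / (2 * PI)))) in *.
  assert (t = t / (2 * PI) * (2 * PI)) by (field; lra).
  split; nra.
Qed.

Lemma shift_2PI_in_period x x' (j : Z) : 0 <= x < 2 * PI -> 0 <= x' < 2 * PI ->
  x' = x + 2 * PI * IZR j -> x = x'.
Proof.
  intros Hx Hx' Hj. assert (HPI := PI_RGT_0).
  assert (Hlo : -1 < IZR j) by (apply Rmult_lt_reg_l with (2 * PI); lra).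
  assert (Hhi : IZR j < 1) by (apply Rmult_lt_reg_l with (2 * PI); lra).
  apply lt_IZR in Hlo. apply lt_IZR in Hhi.
  replace j with 0%Z in Hj by lia. rewrite Rmult_0_r, Rplus_0_r in Hj. congruence.
Qed.

(** * Solutions of a'' = -n^2 a and b'' = -m^2 b *)

Record wave_pair (a a' b b' : R -> R) (n m e : R) : Prop := {
  wave_n_pos : 0 < n;
  wave_n_lt_m : n < m;
  wave_a_deriv : forall t, derivable_pt_lim a t (a' t);
  wave_a'_deriv : forall t, derivable_pt_lim a' t (- (n * n) * a t);
  wave_b_deriv : forall t, derivable_pt_lim b t (b' t);
  wave_b'_deriv : forall t, derivable_pt_lim b' t (- (m * m) * b t);
  wave_a_simple : forall t, a t = 0 -> a' t <> 0;
  wave_sign : e * e = 1;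
  wave_a_shift : forall t, a (t + 2 * PI) = e * a t;
  wave_a'_shift : forall t, a' (t + 2 * PI) = e * a' t;
  wave_b_shift : forall t, b (t + 2 * PI) = e * b t;
  wave_b'_shift : forall t, b' (t + 2 * PI) = e * b' t
}.

Arguments wave_n_pos {a a' b b' n m e}.
Arguments wave_n_lt_m {a a' b b' n m e}.
Arguments wave_a_deriv {a a' b b' n m e}.
Arguments wave_a'_deriv {a a' b b' n m e}.
Arguments wave_b_deriv {a a' b b' n m e}.
Arguments wave_b'_deriv {a a' b b' n m e}.
Arguments wave_a_simple {a a' b b' n m e}.
Arguments wave_sign {a a' b b' n m e}.
Arguments wave_a_shift {a a' b b' n m e}.
Arguments wave_a'_shift {a a' b b' n m e}.
Arguments wave_b_shift {a a' b b' n m e}.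
Arguments wave_b'_shift {a a' b b' n m e}.

Definition wronskian (a a' b b' : R -> R) (t : R) : R := a t * b' t - a' t * b t.

Section Forward_flow.
Variables (a a' b b' : R -> R) (n m e : R).
Hypothesis wave : wave_pair a a' b b' n m e.
Local Notation W := (wronskian a a' b b').

Let a_deriv := wave_a_deriv wave.
Let a'_deriv := wave_a'_deriv wave.
Let b_deriv := wave_b_deriv wave.
Let b'_deriv := wave_b'_deriv wave.

Lemma freq_sq_lt : n * n < m * m.
Proof. pose proof (wave_n_pos wave). pose proof (wave_n_lt_m wave). nra. Qed.

Lemma wave_continuity : continuity a /\ continuity a' /\ continuity b /\ continuity b'.
Proof.
  repeat split; eapply continuity_of_derivative;
    [exact a_deriv | exact a'_deriv | exact b_deriv | exact b'_deriv].
Qed.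

Local Ltac continuity_poly :=
  destruct wave_continuity as (? & ? & ? & ?);
  repeat first [ apply continuity_pt_minus | apply continuity_pt_plus | apply continuity_pt_opp
               | apply continuity_pt_mult | (apply continuity_pt_const; intros ? ?; reflexivity)
               | auto ].

Lemma ab_deriv t : derivable_pt_lim (fun u => a u * b u) t (a' t * b t + a t * b' t).
Proof. eapply derivable_pt_lim_mult_eq; [apply a_deriv | apply b_deriv | ring]. Qed.

Lemma ab_deriv2 t : derivable_pt_lim (fun u => a' u * b u + a u * b' u) t
  (2 * (a' t * b' t) - (n * n + m * m) * (a t * b t)).
Proof.
  eapply derivable_pt_lim_plus_eq;
    [eapply derivable_pt_lim_mult_eq; [apply a'_deriv | apply b_deriv | reflexivity]
    |eapply derivable_pt_lim_mult_eq; [apply a_deriv | apply b'_deriv | reflexivity] | ring].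
Qed.

Lemma wronskian_deriv t : derivable_pt_lim W t ((n * n - m * m) * (a t * b t)).
Proof.
  eapply derivable_pt_lim_minus_eq;
    [eapply derivable_pt_lim_mult_eq; [apply a_deriv | apply b'_deriv | reflexivity]
    |eapply derivable_pt_lim_mult_eq; [apply a'_deriv | apply b_deriv | reflexivity] | ring].
Qed.

Lemma wronskian_deriv2 t : derivable_pt_lim (fun u => (n * n - m * m) * (a u * b u)) t
  ((n * n - m * m) * (a' t * b t + a t * b' t)).
Proof. eapply derivable_pt_lim_scal_eq; [apply ab_deriv | reflexivity]. Qed.

Lemma wronskian_deriv3 t :
  derivable_pt_lim (fun u => (n * n - m * m) * (a' u * b u + a u * b' u)) t
  ((n * n - m * m) * (2 * (a' t * b' t) - (n * n + m * m) * (a t * b t))).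
Proof. eapply derivable_pt_lim_scal_eq; [apply ab_deriv2 | reflexivity]. Qed.

Lemma wronskian_continuous : continuity W.
Proof. exact (continuity_of_derivative _ _ wronskian_deriv). Qed.

Lemma ratio_deriv t : a t <> 0 ->
  derivable_pt_lim (fun u => b u / a u) t (W t / (a t * a t)).
Proof.
  intro Ha. replace (W t / (a t * a t)) with ((b' t * a t - a' t * b t) / (a t)²)
    by (unfold wronskian, Rsqr; field; exact Ha).
  exact (derivable_pt_lim_div b a t (b' t) (a' t) (b_deriv t) (a_deriv t) Ha).
Qed.

Lemma ratio_increasing u v : u < v ->
  (forall t, u <= t <= v -> 0 < W t /\ a t <> 0) -> b u / a u < b v / a v.
Proof.
  intros Huv Hpos.
  apply (increasing_of_derivative_pos (fun t => b t / a t) (fun t => W t / (a t * a t)) u v Huv).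
  - intros c Hc. apply ratio_deriv, Hpos, Hc.
  - intros c Hc. destruct (Hpos c) as [HW Ha]; [lra|].
    apply Rdiv_lt_0_compat; [exact HW | apply Rsqr_pos_lt, Ha].
Qed.

Lemma ratio_decreasing u v : u < v ->
  (forall t, u <= t <= v -> W t < 0 /\ a t <> 0) -> b v / a v < b u / a u.
Proof.
  intros Huv Hneg.
  apply (decreasing_of_derivative_neg (fun t => b t / a t) (fun t => W t / (a t * a t)) u v Huv).
  - intros c Hc. apply ratio_deriv, Hneg, Hc.
  - intros c Hc. destruct (Hneg c) as [HW Ha]; [lra|].
    assert (0 < / (a c * a c)) by (apply Rinv_0_lt_compat, Rsqr_pos_lt, Ha).
    unfold Rdiv. nra.
Qed.

Lemma no_rise_over_period x : ~ (forall u, x <= u <= x + 2 * PI -> 0 < W u /\ a u <> 0).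
Proof.
  intro Hrise. assert (HPI := PI_RGT_0).
  assert (Hx : a x <> 0) by (apply Hrise; lra).
  assert (He : e <> 0) by (intro E; pose proof (wave_sign wave) as Hs; rewrite E in Hs; lra).
  assert (Hlt := ratio_increasing x (x + 2 * PI) ltac:(lra) Hrise).
  rewrite (wave_a_shift wave), (wave_b_shift wave) in Hlt.
  replace (e * b x / (e * a x)) with (b x / a x) in Hlt by (field; split; assumption). lra.
Qed.

(* [K r = a^2 (r + b / a)]: its sign tells on which side of [-r] the ratio [b / a] lies. *)
Let K r t := a t * (r * a t + b t).
Let K1 r t := 2 * r * (a t * a' t) + (a' t * b t + a t * b' t).
Let K2 r t := 2 * r * (a' t * a' t - n * n * (a t * a t))
              + (2 * (a' t * b' t) - (n * n + m * m) * (a t * b t)).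

Lemma K_neg_a_neq0 r u : K r u < 0 -> a u <> 0.
Proof. intros HK Hau. unfold K in HK. rewrite Hau in HK. lra. Qed.

Lemma K_deriv r t : derivable_pt_lim (K r) t (K1 r t).
Proof.
  apply derivable_pt_lim_mult_eq with (a' t) (r * a' t + b' t);
    [apply a_deriv | | unfold K1; ring].
  eapply derivable_pt_lim_plus_eq; [| apply b_deriv | reflexivity].
  eapply derivable_pt_lim_scal_eq; [apply a_deriv | reflexivity].
Qed.

Lemma K1_deriv r t : derivable_pt_lim (K1 r) t (K2 r t).
Proof.
  eapply derivable_pt_lim_plus_eq; [| apply ab_deriv2 | unfold K2; reflexivity].
  eapply derivable_pt_lim_scal_eq; [| reflexivity].
  eapply derivable_pt_lim_mult_eq; [apply a_deriv | apply a'_deriv | ring].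
Qed.

Lemma first_stop r1 r2 x : r1 < r2 -> a x <> 0 -> r2 * a x + b x = 0 -> 0 < W x ->
  exists s, x < s /\ W s * K r1 s = 0 /\ forall u, x <= u < s -> 0 < W u /\ K r1 u < 0.
Proof.
  intros Hr Hax Hzero HWx. assert (HPI := PI_RGT_0).
  assert (HK : continuity (K r1)) by (intro; unfold K; continuity_poly).
  assert (HH : continuity (fun u => W u * K r1 u)).
  { intro u. apply continuity_pt_mult; [apply wronskian_continuous | apply HK]. }
  assert (HKx : K r1 x < 0).
  { unfold K. replace (r1 * a x + b x) with ((r1 - r2) * a x) by lra.
    assert (0 < a x * a x) by (apply Rsqr_pos_lt, Hax). nra. }
  assert (HHx : W x * K r1 x <> 0) by (apply Rmult_integral_contrapositive; split; lra).
  assert (Hstop : exists v, x < v <= x + 2 * PI /\ W v * K r1 v = 0).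
  { apply NNPP. intro Hnone. apply (no_rise_over_period x).
    assert (Hnz : forall u, x <= u <= x + 2 * PI -> W u * K r1 u <> 0).
    { intros u Hu Hu0. destruct (Req_dec u x) as [->|Hux]; [exact (HHx Hu0)|].
      apply Hnone. exists u. split; [lra | exact Hu0]. }
    intros u Hu. split.
    - apply (sign_persistence W x (x + 2 * PI) wronskian_continuous); [|exact HWx|exact Hu].
      intros t Ht HWt. apply (Hnz t Ht). rewrite HWt. ring.
    - intro Hau. apply (Hnz u Hu). unfold K. rewrite Hau. ring. }
  destruct Hstop as [v [Hv Hv0]].
  destruct (first_root _ x v HH) as [s [Hs [Hs0 Hbefore]]]; [lra | exact HHx | exact Hv0 |].
  exists s. split; [lra|]. split; [exact Hs0|]. intros u Hu. split.
  - apply (sign_persistence W x u wronskian_continuous); [|exact HWx|lra].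
    intros t Ht HWt. apply (Hbefore t); [lra|]. rewrite HWt. ring.
  - enough (0 < - K r1 u) by lra.
    apply (sign_persistence (fun t => - K r1 t) x u); [| |lra|lra].
    + intro t. apply continuity_pt_opp, HK.
    + intros t Ht HKt. apply (Hbefore t); [lra|]. replace (K r1 t) with 0 by lra. ring.
Qed.

Lemma ratio_bounded_ahead r1 r2 x s : 0 < r1 -> r1 < r2 -> r2 * a x + b x = 0 ->
  (forall u, x <= u < s -> 0 < W u /\ K r1 u < 0) ->
  forall u, x <= u < s -> b u * b u <= r2 * r2 * (a u * a u).
Proof.
  intros Hr1 Hr Hzero Hahead.
  assert (Ha : forall u, x <= u < s -> a u <> 0)
    by (intros u Hu; apply (K_neg_a_neq0 r1), Hahead, Hu).
  intros u Hu. set (g := b u / a u).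
  assert (Hbu : b u = g * a u) by (unfold g; field; apply Ha, Hu).
  assert (Hlow : - r2 <= g).
  { destruct (Req_dec u x) as [->|Hux].
    - unfold g. replace (b x) with (- r2 * a x) by lra. right. field. apply Ha, Hu.
    - left. replace (- r2) with (b x / a x)
        by (replace (b x) with (- r2 * a x) by lra; field; apply Ha; lra).
      apply ratio_increasing; [lra|]. intros t Ht. split; [apply Hahead; lra | apply Ha; lra]. }
  assert (Hhigh : g < 0).
  { destruct (Hahead u Hu) as [_ HK]. unfold K in HK. rewrite Hbu in HK.
    assert (0 < a u * a u) by (apply Rsqr_pos_lt, Ha, Hu). nra. }
  assert (g * g <= r2 * r2) by nra.
  rewrite Hbu. assert (0 <= a u * a u) by apply Rle_0_sqr. nra.
Qed.

(* At a common root of [a] and [b], [K r] vanishes to second order with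
   [K'' = 2 a' (r a' + b')], so [K r < 0] on the left forces [a' b' < 0]; but [W] vanishes to
   third order with [W''' = 2 (n^2 - m^2) a' b' > 0], so [W < 0] on the left. *)
Lemma no_common_root_ahead r x s : 0 < r -> x < s -> a s = 0 -> b s = 0 ->
  ~ (forall u, x <= u < s -> 0 < W u /\ K r u < 0).
Proof.
  intros Hr Hxs Has Hbs Hahead.
  assert (Ha's : a' s <> 0) by (apply (wave_a_simple wave), Has).
  assert (Hsq : 0 < a' s * a' s) by (apply Rsqr_pos_lt, Ha's).
  assert (HK2 : K2 r s <= 0).
  { apply Rnot_lt_le. intro HK2.
    destruct (pos_left_of_double_root (K r) (K1 r) (K2 r) s (K_deriv r) (K1_deriv r))
      as [d [Hd Hpos]]; [unfold K2; continuity_poly | unfold K; rewrite Has; ring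
                        | unfold K1; rewrite Has, Hbs; ring | exact HK2 |].
    destruct (exists_left_point x s d Hxs Hd) as [u [Hu Hud]].
    specialize (Hpos u (conj Hud (proj2 Hu))). destruct (Hahead u Hu). lra. }
  unfold K2 in HK2. rewrite Has, Hbs in HK2.
  assert (Hab : a' s * b' s < 0) by nra.
  assert (Hnm := freq_sq_lt).
  destruct (neg_left_of_triple_root W _ _ _ s wronskian_deriv wronskian_deriv2 wronskian_deriv3)
    as [d [Hd Hneg]];
    [continuity_poly | unfold wronskian; rewrite Has, Hbs; ring | rewrite Has; ring
    | rewrite Has, Hbs; ring | rewrite Has, Hbs; nra |].
  destruct (exists_left_point x s d Hxs Hd) as [u [Hu Hud]].
  specialize (Hneg u (conj Hud (proj2 Hu))). destruct (Hahead u Hu). lra.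
Qed.

(* A root of [W] that is not a root of [r a + b] has [a b < 0] (as [K r < 0] there), hence
   [W' = (n^2 - m^2) a b > 0] and [W < 0] just before it. *)
Lemma stop_is_root r x s : 0 < r -> x < s -> a s <> 0 -> W s * K r s = 0 ->
  (forall u, x <= u < s -> 0 < W u /\ K r u < 0) -> r * a s + b s = 0.
Proof.
  intros Hr Hxs Has Hstop Hahead. apply NNPP. intro Hroot.
  assert (HKs : K r s < 0).
  { assert (K r s <= 0).
    { apply (left_limit_nonpos (K r) x s Hxs); [unfold K; continuity_poly|].
      intros u Hu. left. apply Hahead, Hu. }
    assert (K r s <> 0) by (apply Rmult_integral_contrapositive; split; assumption). lra. }
  assert (HWs : W s = 0).
  { destruct (Rmult_integral _ _ Hstop); [assumption | lra]. }
  assert (Hab : a s * b s < 0).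
  { unfold K in HKs. assert (0 < a s * a s) by (apply Rsqr_pos_lt, Has). nra. }
  assert (Hnm := freq_sq_lt).
  destruct (neg_left_of_simple_root W _ s wronskian_deriv) as [d [Hd Hneg]];
    [continuity_poly | exact HWs | nra |].
  destruct (exists_left_point x s d Hxs Hd) as [u [Hu Hud]].
  specialize (Hneg u (conj Hud (proj2 Hu))). destruct (Hahead u Hu). lra.
Qed.

Lemma flow_right r1 r2 x : 0 < r1 -> r1 < r2 -> a x <> 0 -> r2 * a x + b x = 0 -> 0 < W x ->
  exists t, x < t /\ r1 * a t + b t = 0 /\ a t <> 0 /\
    forall u, x <= u < t -> 0 < W u /\ a u <> 0.
Proof.
  intros Hr1 Hr Hax Hzero HWx.
  destruct (first_stop r1 r2 x Hr Hax Hzero HWx) as [s [Hxs [Hstop Hahead]]].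
  assert (Has : a s <> 0).
  { intro Has. apply (no_common_root_ahead r1 x s Hr1 Hxs Has); [|exact Hahead].
    assert (Hbound : b s * b s - r2 * r2 * (a s * a s) <= 0).
    { apply (left_limit_nonpos (fun u => b u * b u - r2 * r2 * (a u * a u)) x s Hxs);
        [continuity_poly|].
      intros u Hu. pose proof (ratio_bounded_ahead r1 r2 x s Hr1 Hr Hzero Hahead u Hu). lra. }
    rewrite Has in Hbound. nra. }
  exists s. split; [exact Hxs|]. split; [exact (stop_is_root r1 x s Hr1 Hxs Has Hstop Hahead)|].
  split; [exact Has|]. intros u Hu. split; [apply Hahead, Hu | apply (K_neg_a_neq0 r1), Hahead, Hu].
Qed.

End Forward_flow.

Lemma reflect_shift (f : R -> R) e : e * e = 1 -> (forall t, f (t + 2 * PI) = e * f t) ->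
  forall t, f (- (t + 2 * PI)) = e * f (- t).
Proof.
  intros He Hf t. specialize (Hf (- (t + 2 * PI))).
  replace (- (t + 2 * PI) + 2 * PI) with (- t) in Hf by ring.
  rewrite Hf, <- Rmult_assoc, He. ring.
Qed.

Lemma wave_pair_reflect a a' b b' n m e : wave_pair a a' b b' n m e ->
  wave_pair (fun t => a (- t)) (fun t => - a' (- t)) (fun t => b (- t)) (fun t => - b' (- t)) n m e.
Proof.
  intros [Hn Hnm Ha Ha' Hb Hb' Hsimple He Has Ha's Hbs Hb's]. split.
  - exact Hn.
  - exact Hnm.
  - intro t. apply derivable_pt_lim_opp_comp, Ha.
  - intro t. replace (- (n * n) * a (- t)) with (- - (- (n * n) * a (- t))) by ring.
    apply (derivable_pt_lim_opp_comp (fun u => - a' u)), (derivable_pt_lim_opp a'), Ha'.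
  - intro t. apply derivable_pt_lim_opp_comp, Hb.
  - intro t. replace (- (m * m) * b (- t)) with (- - (- (m * m) * b (- t))) by ring.
    apply (derivable_pt_lim_opp_comp (fun u => - b' u)), (derivable_pt_lim_opp b'), Hb'.
  - intros t Hat Ha't. apply (Hsimple (- t) Hat). lra.
  - exact He.
  - exact (reflect_shift a e He Has).
  - intro t. cbv beta. rewrite (reflect_shift a' e He Ha's). ring.
  - exact (reflect_shift b e He Hbs).
  - intro t. cbv beta. rewrite (reflect_shift b' e He Hb's). ring.
Qed.

Lemma wronskian_reflect a a' b b' u :
  wronskian (fun t => a (- t)) (fun t => - a' (- t)) (fun t => b (- t)) (fun t => - b' (- t)) u
  = - wronskian a a' b b' (- u).
Proof. unfold wronskian. ring. Qed.

Lemma flow_left a a' b b' n m e r1 r2 x : wave_pair a a' b b' n m e ->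
  0 < r1 -> r1 < r2 -> a x <> 0 -> r2 * a x + b x = 0 -> wronskian a a' b b' x < 0 ->
  exists t, t < x /\ r1 * a t + b t = 0 /\ a t <> 0 /\
    forall u, t < u <= x -> wronskian a a' b b' u < 0 /\ a u <> 0.
Proof.
  intros wave Hr1 Hr Hax Hzero HWx.
  destruct (flow_right _ _ _ _ n m e (wave_pair_reflect _ _ _ _ _ _ _ wave) r1 r2 (- x) Hr1 Hr)
    as [t [Hxt [Hroot [Hat Hpath]]]]; rewrite ?Ropp_involutive; try assumption.
  { rewrite wronskian_reflect, Ropp_involutive. lra. }
  exists (- t). split; [lra|]. split; [exact Hroot|]. split; [exact Hat|].
  intros u Hu. destruct (Hpath (- u)) as [HW Ha]; [lra|].
  rewrite wronskian_reflect, Ropp_involutive in HW. rewrite Ropp_involutive in Ha.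
  split; [lra | exact Ha].
Qed.

(** * Counting roots modulo 2 pi *)

Section Root_count.
Variables (a a' b b' : R -> R) (n m e r1 r2 : R).
Hypothesis wave : wave_pair a a' b b' n m e.
Hypothesis r1_pos : 0 < r1.
Hypothesis r1_lt_r2 : r1 < r2.
Hypothesis r1_simple : forall t, r1 * a t + b t = 0 -> r1 * a' t + b' t <> 0.
Hypothesis r2_simple : forall t, r2 * a t + b t = 0 -> r2 * a' t + b' t <> 0.
Local Notation W := (wronskian a a' b b').

Let sign_sq := wave_sign wave.
Let a_shift := shift_mult_2PI a e sign_sq (wave_a_shift wave).
Let a'_shift := shift_mult_2PI a' e sign_sq (wave_a'_shift wave).
Let b_shift := shift_mult_2PI b e sign_sq (wave_b_shift wave).
Let b'_shift := shift_mult_2PI b' e sign_sq (wave_b'_shift wave).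

Lemma shift_factor_sq (j : Z) : e ^ Z.abs_nat j * e ^ Z.abs_nat j = 1.
Proof. rewrite <- Rpow_mult_distr, sign_sq. apply pow1. Qed.

Lemma shift_factor_neq0 (j : Z) : e ^ Z.abs_nat j <> 0.
Proof. intro H0. pose proof (shift_factor_sq j) as Hsq. rewrite H0 in Hsq. lra. Qed.

Lemma wronskian_shift (j : Z) t : W (t + 2 * PI * IZR j) = W t.
Proof.
  unfold wronskian. rewrite a_shift, a'_shift, b_shift, b'_shift.
  rewrite <- (Rmult_1_l (a t * b' t - a' t * b t)), <- (shift_factor_sq j). ring.
Qed.

Lemma root_shift r (j : Z) t : r * a (t + 2 * PI * IZR j) + b (t + 2 * PI * IZR j) = 0 <->
  r * a t + b t = 0.
Proof.
  rewrite a_shift, b_shift.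
  replace (r * (e ^ Z.abs_nat j * a t) + e ^ Z.abs_nat j * b t)
    with (e ^ Z.abs_nat j * (r * a t + b t)) by ring.
  split; intro H0; [|rewrite H0; ring].
  destruct (Rmult_integral _ _ H0) as [Hj|]; [|assumption].
  exfalso. exact (shift_factor_neq0 j Hj).
Qed.

Lemma wronskian_at_root r t : r * a t + b t = 0 -> W t = a t * (r * a' t + b' t).
Proof. intro H0. unfold wronskian. replace (b t) with (- r * a t) by lra. ring. Qed.

(* The root [x] of [r2 a + b] travels to the root [t] of [r1 a + b] while [b / a] moves
   monotonically from [-r2] to [-r1]. *)
Definition flows_to x t := r1 * a t + b t = 0 /\ a t <> 0 /\
  ((x < t /\ forall u, x <= u < t -> 0 < W u /\ a u <> 0) \/
   (t < x /\ forall u, t < u <= x -> W u < 0 /\ a u <> 0)).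

Lemma flows_to_exists x : a x <> 0 -> r2 * a x + b x = 0 -> exists t, flows_to x t.
Proof.
  intros Hax Hzero.
  assert (HW : W x <> 0).
  { rewrite (wronskian_at_root r2 x Hzero). apply Rmult_integral_contrapositive.
    split; [exact Hax | exact (r2_simple x Hzero)]. }
  destruct (Rlt_or_le 0 (W x)) as [Hpos|Hneg].
  - destruct (flow_right _ _ _ _ n m e wave r1 r2 x r1_pos r1_lt_r2 Hax Hzero Hpos)
      as [t [Hxt [Hroot [Hat Hpath]]]].
    exists t. repeat split; try assumption. left. split; assumption.
  - destruct (flow_left _ _ _ _ n m e r1 r2 x wave r1_pos r1_lt_r2 Hax Hzero)
      as [t [Htx [Hroot [Hat Hpath]]]]; [lra|].
    exists t. repeat split; try assumption. right. split; assumption.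
Qed.

Lemma flows_to_shift (j : Z) x t : flows_to x t ->
  flows_to (x + 2 * PI * IZR j) (t + 2 * PI * IZR j).
Proof.
  assert (Ha : forall u, a u <> 0 -> a (u + 2 * PI * IZR j) <> 0).
  { intros u Hu. rewrite a_shift. apply Rmult_integral_contrapositive.
    split; [apply shift_factor_neq0 | exact Hu]. }
  intros [Hroot [Hat Hpath]]. split; [apply root_shift, Hroot|]. split; [apply Ha, Hat|].
  destruct Hpath as [[Hxt Hpath]|[Htx Hpath]]; [left|right]; (split; [lra|]);
    intros u Hu; replace u with ((u - 2 * PI * IZR j) + 2 * PI * IZR j) by ring;
    rewrite wronskian_shift; destruct (Hpath (u - 2 * PI * IZR j)) as [HW Hau]; try lra;
    (split; [exact HW | apply Ha, Hau]).
Qed.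

Lemma flows_to_side x t : flows_to x t -> (x < t /\ 0 < W t) \/ (t < x /\ W t < 0).
Proof.
  intros [Hroot [Hat Hpath]].
  assert (HW : W t <> 0).
  { rewrite (wronskian_at_root r1 t Hroot). apply Rmult_integral_contrapositive.
    split; [exact Hat | exact (r1_simple t Hroot)]. }
  assert (HWc := wronskian_continuous _ _ _ _ n m e wave).
  destruct Hpath as [[Hxt Hpath]|[Htx Hpath]]; [left|right]; (split; [assumption|]).
  - enough (- W t <= 0) by lra.
    apply (left_limit_nonpos (fun u => - W u) x t Hxt); [apply continuity_pt_opp, HWc|].
    intros u Hu. destruct (Hpath u Hu). lra.
  - enough (W t <= 0) by lra.
    apply (right_limit_nonpos W x t Htx (HWc t)). intros u Hu. destruct (Hpath u Hu). lra.
Qed.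

Lemma flows_to_injective x1 x2 t : r2 * a x1 + b x1 = 0 -> r2 * a x2 + b x2 = 0 ->
  flows_to x1 t -> flows_to x2 t -> x1 = x2.
Proof.
  intros Hz1 Hz2 Hf1 Hf2.
  assert (Hratio : forall x, r2 * a x + b x = 0 -> a x <> 0 -> b x / a x = - r2).
  { intros x Hx Hax. replace (b x) with (- r2 * a x) by lra. field. exact Hax. }
  destruct (flows_to_side x1 t Hf1) as [[H1 HW1]|[H1 HW1]];
  destruct (flows_to_side x2 t Hf2) as [[H2 HW2]|[H2 HW2]]; try lra;
  destruct Hf1 as [_ [_ [[L1 P1]|[L1 P1]]]]; try lra;
  destruct Hf2 as [_ [_ [[L2 P2]|[L2 P2]]]]; try lra;
  (assert (Ha1 : a x1 <> 0) by (apply P1; lra));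
  (assert (Ha2 : a x2 <> 0) by (apply P2; lra));
  destruct (Rtotal_order x1 x2) as [Hlt|[Heq|Hgt]]; try exact Heq; exfalso.
  - assert (Hm := ratio_increasing _ _ _ _ n m e wave x1 x2 Hlt ltac:(intros u Hu; apply P1; lra)).
    rewrite (Hratio x1), (Hratio x2) in Hm; try assumption. lra.
  - assert (Hm := ratio_increasing _ _ _ _ n m e wave x2 x1 Hgt ltac:(intros u Hu; apply P2; lra)).
    rewrite (Hratio x1), (Hratio x2) in Hm; try assumption. lra.
  - assert (Hm := ratio_decreasing _ _ _ _ n m e wave x1 x2 Hlt ltac:(intros u Hu; apply P2; lra)).
    rewrite (Hratio x1), (Hratio x2) in Hm; try assumption. lra.
  - assert (Hm := ratio_decreasing _ _ _ _ n m e wave x2 x1 Hgt ltac:(intros u Hu; apply P1; lra)).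
    rewrite (Hratio x1), (Hratio x2) in Hm; try assumption. lra.
Qed.

Definition linked x y := (a x = 0 /\ y = x) \/
  exists (j : Z) t, t = y + 2 * PI * IZR j /\ flows_to x t.

Lemma linked_exists x : 0 <= x < 2 * PI -> r2 * a x + b x = 0 ->
  exists y, (0 <= y < 2 * PI /\ r1 * a y + b y = 0) /\ linked x y.
Proof.
  intros Hx Hzero. destruct (Req_dec (a x) 0) as [Hax|Hax].
  - exists x. split; [split; [exact Hx|] | left; split; [exact Hax | reflexivity]].
    rewrite Hax in *. lra.
  - destruct (flows_to_exists x Hax Hzero) as [t Ht].
    destruct (decompose_mod_2PI t) as [j [y [Hy Hty]]].
    exists y. split; [split; [exact Hy|] | right; exists j, t; split; assumption].
    apply (root_shift r1 j). rewrite <- Hty. exact (proj1 Ht).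
Qed.

Lemma flows_to_avoids_common_root x y (j : Z) : a y = 0 -> ~ flows_to x (y + 2 * PI * IZR j).
Proof. intros Hay [_ [Hat _]]. apply Hat. rewrite a_shift, Hay. ring. Qed.

Lemma linked_injective x1 x2 y : 0 <= x1 < 2 * PI -> 0 <= x2 < 2 * PI ->
  r2 * a x1 + b x1 = 0 -> r2 * a x2 + b x2 = 0 -> linked x1 y -> linked x2 y -> x1 = x2.
Proof.
  intros Hx1 Hx2 Hz1 Hz2 [[A1 E1]|[j1 [t1 [Ht1 F1]]]] [[A2 E2]|[j2 [t2 [Ht2 F2]]]].
  - congruence.
  - subst y t2. exfalso. exact (flows_to_avoids_common_root x2 x1 j2 A1 F2).
  - subst y t1. exfalso. exact (flows_to_avoids_common_root x1 x2 j1 A2 F1).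
  - set (j := (j1 - j2)%Z).
    assert (Hshift : t2 + 2 * PI * IZR j = t1) by (unfold j; rewrite minus_IZR; lra).
    assert (F2' := flows_to_shift j x2 t2 F2). rewrite Hshift in F2'.
    symmetry. apply (shift_2PI_in_period x2 x1 j Hx2 Hx1).
    apply (flows_to_injective x1 (x2 + 2 * PI * IZR j) t1 Hz1);
      [apply root_shift, Hz2 | exact F1 | exact F2'].
Qed.

Theorem root_count_antitone l1 l2 : NoDup l2 ->
  (forall t, In t l1 <-> 0 <= t < 2 * PI /\ r1 * a t + b t = 0) ->
  (forall t, In t l2 <-> 0 <= t < 2 * PI /\ r2 * a t + b t = 0) ->
  (length l2 <= length l1)%nat.
Proof.
  intros Hnd L1 L2. apply (NoDup_length_le_of_rel linked l2 Hnd l1).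
  - intros x Hx. apply L2 in Hx. destruct (linked_exists x (proj1 Hx) (proj2 Hx)) as [y [Hy Hxy]].
    exists y. split; [apply L1, Hy | exact Hxy].
  - intros x1 x2 y Hx1 Hx2. apply L2 in Hx1, Hx2. apply linked_injective; tauto.
Qed.

End Root_count.

(** * The trigonometric pair behind T *)

Lemma sin_add_nat_PI (N : nat) x : sin (x + INR N * PI) = (-1) ^ N * sin x.
Proof.
  induction N as [|N IH]; simpl pow.
  - simpl INR. rewrite Rmult_0_l, Rplus_0_r. ring.
  - rewrite S_INR. replace (x + (INR N + 1) * PI) with (x + INR N * PI + PI) by ring.
    rewrite neg_sin, IH. ring.
Qed.

Lemma cos_add_nat_PI (N : nat) x : cos (x + INR N * PI) = (-1) ^ N * cos x.
Proof.
  induction N as [|N IH]; simpl pow.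
  - simpl INR. rewrite Rmult_0_l, Rplus_0_r. ring.
  - rewrite S_INR. replace (x + (INR N + 1) * PI) with (x + INR N * PI + PI) by ring.
    rewrite neg_cos, IH. ring.
Qed.

Lemma derivable_pt_lim_sin_comp (f : R -> R) t l :
  derivable_pt_lim f t l -> derivable_pt_lim (fun u => sin (f u)) t (l * cos (f t)).
Proof.
  intro Hf. rewrite Rmult_comm.
  exact (derivable_pt_lim_comp f sin t l (cos (f t)) Hf (derivable_pt_lim_sin _)).
Qed.

Lemma derivable_pt_lim_cos_comp (f : R -> R) t l :
  derivable_pt_lim f t l -> derivable_pt_lim (fun u => cos (f u)) t (- (l * sin (f t))).
Proof.
  intro Hf. replace (- (l * sin (f t))) with (- sin (f t) * l) by ring.
  exact (derivable_pt_lim_comp f cos t l (- sin (f t)) Hf (derivable_pt_lim_cos _)).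
Qed.

Lemma derivable_pt_lim_linear w t : derivable_pt_lim (fun u => w * u) t w.
Proof. eapply derivable_pt_lim_scal_eq; [apply derivable_pt_lim_id | ring]. Qed.

Lemma derivable_pt_lim_affine w c t : derivable_pt_lim (fun u => w * u + c) t w.
Proof.
  eapply derivable_pt_lim_plus_eq;
    [apply derivable_pt_lim_linear | apply derivable_pt_lim_const | ring].
Qed.

Lemma frequencies_half_integers p q : (2 <= q)%nat -> (q < p)%nat ->
  exists Na d : nat, 2 * nn p q = INR Na /\ 2 * mm p q = INR (Na + 2 * d) /\
    (0 < Na)%nat /\ (0 < d)%nat.
Proof.
  intros Hq Hp.
  destruct (Nat.gcd_divide_l (p - 1) (q - 1)) as [P HP].
  destruct (Nat.gcd_divide_r (p - 1) (q - 1)) as [Q HQ].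
  fold (rr p q) in HP, HQ. set (r := rr p q) in *.
  assert (Hr : r <> 0%nat) by (intro Hr; rewrite Hr in HP; lia).
  assert (HPQ : (Q < P)%nat) by nia.
  exists ((p + 1) * Q)%nat, (P - Q)%nat.
  assert (Hr' : 0 < INR r) by (apply lt_0_INR; lia).
  assert (EP : INR p - 1 = INR P * INR r)
    by (rewrite <- mult_INR, <- HP, minus_INR by lia; simpl; ring).
  assert (EQ : INR q - 1 = INR Q * INR r)
    by (rewrite <- mult_INR, <- HQ, minus_INR by lia; simpl; ring).
  replace ((p + 1) * Q + 2 * (P - Q))%nat with (P * (q + 1))%nat by nia.
  unfold nn, mm. fold r. rewrite !mult_INR, !plus_INR. simpl (INR 1).
  split; [rewrite EQ; field; lra|]. split; [rewrite EP; field; lra|]. split; nia.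
Qed.

Definition wave_a p q argmu k t := (-1) ^ k * sin (nn p q * t + ck' p argmu k).
Definition wave_a' p q argmu k t := (-1) ^ k * (nn p q * cos (nn p q * t + ck' p argmu k)).
Definition wave_b p q t := CC p q * sin (mm p q * t).
Definition wave_b' p q t := CC p q * (mm p q * cos (mm p q * t)).

Lemma T_wave p q argmu k t rho : T p q argmu k t rho = rho * wave_a p q argmu k t + wave_b p q t.
Proof. unfold T, wave_a, wave_b. ring. Qed.

Lemma T_wave_pair p q argmu k : (2 <= q)%nat -> (q < p)%nat -> exists e,
  wave_pair (wave_a p q argmu k) (wave_a' p q argmu k) (wave_b p q) (wave_b' p q)
    (nn p q) (mm p q) e.
Proof.
  intros Hq Hp. destruct (frequencies_half_integers p q Hq Hp) as (Na & d & Hn & Hm & HNa & Hd).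
  assert (Hshift_n : forall t c, nn p q * (t + 2 * PI) + c = (nn p q * t + c) + INR Na * PI)
    by (intros; rewrite <- Hn; ring).
  assert (Hshift_m : forall t, mm p q * (t + 2 * PI) = mm p q * t + INR (Na + 2 * d) * PI)
    by (intros; rewrite <- Hm; ring).
  assert (Hsign : (-1) ^ (Na + 2 * d) = (-1) ^ Na)
    by (rewrite pow_add, pow_mult; replace ((-1) ^ 2) with 1 by ring; rewrite pow1; ring).
  assert (Hnpos : 0 < nn p q) by (assert (0 < INR Na) by (apply lt_0_INR; lia); lra).
  exists ((-1) ^ Na). unfold wave_a, wave_a', wave_b, wave_b'. split.
  - exact Hnpos.
  - assert (INR Na < INR (Na + 2 * d)) by (apply lt_INR; lia). lra.
  - intro t. eapply derivable_pt_lim_scal_eq;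
      [apply derivable_pt_lim_sin_comp, derivable_pt_lim_affine | reflexivity].
  - intro t. eapply derivable_pt_lim_scal_eq;
      [eapply derivable_pt_lim_scal_eq;
         [apply derivable_pt_lim_cos_comp, derivable_pt_lim_affine | reflexivity] | ring].
  - intro t. eapply derivable_pt_lim_scal_eq;
      [apply (derivable_pt_lim_sin_comp (fun u => mm p q * u)), derivable_pt_lim_linear
      | reflexivity].
  - intro t. eapply derivable_pt_lim_scal_eq;
      [eapply derivable_pt_lim_scal_eq;
         [apply (derivable_pt_lim_cos_comp (fun u => mm p q * u)), derivable_pt_lim_linear
         | reflexivity] | ring].
  - intros t Hsin Hcos.
    assert (Hk : (-1) ^ k <> 0) by (apply pow_nonzero; lra).
    destruct (Rmult_integral _ _ Hsin) as [|Hs]; [contradiction|].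
    destruct (Rmult_integral _ _ Hcos) as [|Hc]; [contradiction|].
    destruct (Rmult_integral _ _ Hc) as [|Hc']; [lra|].
    pose proof (sin2_cos2 (nn p q * t + ck' p argmu k)) as Hpyth.
    rewrite Hs, Hc' in Hpyth. unfold Rsqr in Hpyth. lra.
  - rewrite <- Rpow_mult_distr. replace (-1 * -1) with 1 by ring. apply pow1.
  - intro t. rewrite Hshift_n, sin_add_nat_PI. ring.
  - intro t. rewrite Hshift_n, cos_add_nat_PI. ring.
  - intro t. rewrite Hshift_m, sin_add_nat_PI, Hsign. ring.
  - intro t. rewrite Hshift_m, cos_add_nat_PI, Hsign. ring.
Qed.

Lemma T_deriv p q argmu k rho t : (2 <= q)%nat -> (q < p)%nat ->
  derivable_pt_lim (fun u => T p q argmu k u rho) t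
    (rho * wave_a' p q argmu k t + wave_b' p q t).
Proof.
  intros Hq Hp. destruct (T_wave_pair p q argmu k Hq Hp) as [e wave].
  apply (derivable_pt_lim_ext _ _ _ _ (fun u => eq_sym (T_wave p q argmu k u rho))).
  eapply derivable_pt_lim_plus_eq;
    [eapply derivable_pt_lim_scal_eq; [apply (wave_a_deriv wave) | reflexivity]
    | apply (wave_b_deriv wave) | reflexivity].
Qed.

Lemma T_simple_roots p q argmu k rho : (2 <= q)%nat -> (q < p)%nat ->
  all_zeros_simple p q argmu k rho -> forall t,
  rho * wave_a p q argmu k t + wave_b p q t = 0 ->
  rho * wave_a' p q argmu k t + wave_b' p q t <> 0.
Proof.
  intros Hq Hp Hsimple t Ht.
  apply (Hsimple t); [rewrite T_wave; exact Ht | apply T_deriv; assumption].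
Qed.

Lemma T_roots_enumerable p q argmu k rho : (2 <= q)%nat -> (q < p)%nat ->
  all_zeros_simple p q argmu k rho ->
  exists l, NoDup l /\ forall t, In t l <-> (0 <= t < 2 * PI /\ T p q argmu k t rho = 0).
Proof.
  intros Hq Hp Hsimple. pose proof PI_RGT_0.
  apply (simple_roots_enumerable _ (fun t => rho * wave_a' p q argmu k t + wave_b' p q t)
           0 (2 * PI));
    [lra | intro t; apply T_deriv; assumption |].
  intros t Ht. apply (Hsimple t Ht), T_deriv; assumption.
Qed.

Theorem lemma4p1 (p q : nat) (argmu : R) (k : nat) (rho1 rho2 : R) :
  (2 <= q)%nat -> (q < p)%nat -> (k < rr p q)%nat ->
  0 < rho1 -> rho1 < rho2 ->
  all_zeros_simple p q argmu k rho1 ->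
  all_zeros_simple p q argmu k rho2 ->
  exists N1 N2 : nat,
    num_zeros p q argmu k rho1 N1 /\ num_zeros p q argmu k rho2 N2 /\
    (N2 <= N1)%nat.
Proof.
  intros Hq Hp _ Hrho1 Hrho S1 S2.
  destruct (T_wave_pair p q argmu k Hq Hp) as [e wave].
  destruct (T_roots_enumerable p q argmu k rho1 Hq Hp S1) as [l1 [Hnd1 Hl1]].
  destruct (T_roots_enumerable p q argmu k rho2 Hq Hp S2) as [l2 [Hnd2 Hl2]].
  exists (length l1), (length l2). split; [exists l1; auto|]. split; [exists l2; auto|].
  apply (root_count_antitone _ _ _ _ _ _ e rho1 rho2 wave Hrho1 Hrho
           (T_simple_roots p q argmu k rho1 Hq Hp S1) (T_simple_roots p q argmu k rho2 Hq Hp S2)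
           l1 l2 Hnd2).
  - intro t. rewrite Hl1, T_wave. reflexivity.
  - intro t. rewrite Hl2, T_wave. reflexivity.
Qed.
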